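(* Let $X$ be a random variable taking values in $[0,1]$ with law $P$, and let $\widehat X\in[0,1)$ be a nonrandom number. Then for every $\xi\in[-1,1]$, \[ \mathbb{E}_P\exp\left\{\xi\,(X-\mathbb{E}_P[X])-\xi^2\,\psi_E(|X-\widehat X|)\right\}\le 1 . \]
   Context: $\psi_E(x)=-\log(1-x)-x$ for $x\in[0,1)$, and $\psi_E(1):=+\infty$. Conventions: $0\cdot(+\infty)=0$ and $\exp(-\infty)=0$. *)

From HB Require Import structures.
From mathcomp Require Import all_boot all_order all_algebra.
From mathcomp Require Import all_classical all_reals all_analysis.
Set Implicit Arguments. Unset Strict Implicit. Unset Printing Implicit Defensive.
Import Order.TTheory GRing.Theory Num.Theory.
Local Open Scope ring_scope.

(* psi_E(x) = -log(1-x) - x for x in [0,1), and psi_E(1) = +oo.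
   (Only ever applied to arguments in [0,1]; for x >= 1 we return +oo.) *)
Definition psiE {R : realType} (x : R) : \bar R :=
  if x < 1 then (- ln (1 - x) - x)%:E else +oo%E.

From HB Require Import structures.
From mathcomp Require Import all_boot all_order all_algebra.
From mathcomp Require Import all_classical all_reals all_analysis.
Import Order.TTheory GRing.Theory Num.Theory.
From mathcomp Require Import ring lra.
Import numFieldNormedType.Exports.
Local Open Scope classical_set_scope.
Local Open Scope ring_scope.

(* The heart of the matter is the elementary inequality
   xi u - xi^2 psi(|u|) <= ln (1 + xi u)  for |xi| <= 1 and |u| < 1,
   so that exp(xi (X - Xh) - xi^2 psi(|X - Xh|)) <= 1 + xi (X - Xh).
   Taking expectations and multiplying by exp(-xi (E X - Xh)) bounds the
   left-hand side by (1 + y) exp(-y) with y = xi (E X - Xh), which is at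
   most 1. *)

Section psi_inequality.
Variable R : realType.

Definition psi (x : R) : R := - ln (1 - x) - x.

Let gap (c : R) : R -> R :=
  (@ln R \o (cst 1 + c \*: id)) - c \*: id + c ^+ 2 \*: (- (@ln R \o (cst 1 - id)) - id).

Let gapE c x : gap c x = ln (1 + c * x) - c * x + c ^+ 2 * psi x.
Proof. by []. Qed.

Lemma is_derive_gap (c x : R) : 0 < 1 + c * x -> x < 1 ->
  is_derive x 1 (gap c) (c ^+ 2 * x * ((1 - x)^-1 - (1 + c * x)^-1)).
Proof.
move=> cx_gt0 x_lt1; have x1_gt0 : 0 < 1 - x by rewrite subr_gt0.
have dD : is_derive x 1 (cst 1 + c \*: @id R) c.
  apply: is_derive_eq
    (is_deriveD (is_derive_cst (1 : R) x 1) (is_deriveZ c (is_derive_id x 1))) _.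
  by rewrite add0r /= -[RHS]mulr1.
have dB : is_derive x 1 (cst 1 - @id R) (-1).
  apply: is_derive_eq (is_deriveB (is_derive_cst (1 : R) x 1) (is_derive_id x 1)) _.
  by rewrite add0r.
have dlnD := @is_derive1_comp R (@ln R) _ x _ _ (is_derive1_ln cx_gt0) dD.
have dlnB := @is_derive1_comp R (@ln R) _ x _ _ (is_derive1_ln x1_gt0) dB.
apply: is_derive_eq (is_deriveD (is_deriveB dlnD (is_deriveZ c (is_derive_id x 1)))
  (is_deriveZ (c ^+ 2) (is_deriveB (is_deriveN dlnB) (is_derive_id x 1)))) _.
by rewrite -[c%:A]/(c * 1) -[_ *: _]/(_ * _) mulr1; field; rewrite !gt_eqF.
Qed.

Lemma psi_le_ln1D (c a : R) : -1 <= c <= 1 -> 0 <= a < 1 ->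
  c * a - c ^+ 2 * psi a <= ln (1 + c * a).
Proof.
move=> /andP[c_geN1 c_le1] /andP[a_ge0 a_lt1].
have dom x : 0 <= x <= a -> 0 < 1 + c * x /\ x < 1.
  by move=> /andP[x_ge0 x_lea]; split; nra.
have dgap x : x \in `[0, a] ->
    is_derive x 1 (gap c) (c ^+ 2 * x * ((1 - x)^-1 - (1 + c * x)^-1)).
  by rewrite in_itv /= => /dom[cx_gt0 x_lt1]; exact: is_derive_gap.
have sub x : x \in `]0, a[ -> x \in `[0, a] by apply: subset_itv_oo_cc.
have gap_mono : {in `[0, a] &, {homo gap c : x y / x <= y}}.
  apply: ger0_derive1_le_cc => [x /sub /dgap ? | x /[dup] xa /sub xa' | ].
  - exact: ex_derive.
  - rewrite derive1E (@derive_val _ _ _ _ _ _ _ (dgap x xa')).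
    move: xa xa'; rewrite !in_itv /= => /andP[x_gt0 _] /dom[cx_gt0 x_lt1].
    apply: mulr_ge0; first by rewrite mulr_ge0 ?sqr_ge0 ?ltW.
    by rewrite subr_ge0 lef_pV2 ?posrE ?subr_gt0 //; nra.
  - apply: continuous_in_subspaceT => x /[!inE] /dgap dx.
    by apply/differentiable_continuous/derivable1_diffP; exact: ex_derive.
have : gap c 0 <= gap c a.
  by apply: gap_mono; rewrite ?in_itv /= ?a_ge0 ?andbT ?lexx.
by rewrite !gapE /psi !(mulr0, addr0, subr0, ln1, oppr0); lra.
Qed.

Lemma expR_psi_le (xi u : R) : -1 <= xi <= 1 -> -1 < u < 1 ->
  expR (xi * u - xi ^+ 2 * psi `|u|) <= 1 + xi * u.
Proof.
move=> /andP[xi_geN1 xi_le1] /andP[u_gtN1 u_lt1].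
have xiu_gt0 : 0 < 1 + xi * u.
  have [u_ge0|u_lt0] := leP 0 u.
    have : 0 <= (xi + 1) * u by apply: mulr_ge0; lra.
    nra.
  have : 0 <= (1 - xi) * - u by apply: mulr_ge0; lra.
  nra.
rewrite -[leRHS]lnK ?posrE // ler_expR.
have [u_ge0|u_lt0] := leP 0 u.
  by rewrite ger0_norm //; apply: psi_le_ln1D; lra.
have := @psi_le_ln1D (- xi) (- u).
by rewrite ltr0_norm // mulrNN sqrrN; apply; lra.
Qed.

End psi_inequality.

Arguments psi {R} x.

Local Open Scope ereal_scope.

(* Unlike [ge0_le_integral], no measurability is required: the integral of a
   nonnegative function is the supremum of the integrals of the simple
   functions below it. *)
Lemma ge0_le_integralT {d} {T : measurableType d} {R : realType}
    (mu : {measure set T -> \bar R}) (f g : T -> \bar R) :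
  (forall x, 0 <= f x) -> (forall x, f x <= g x) ->
  \int[mu]_x f x <= \int[mu]_x g x.
Proof.
move=> f_ge0 fg; have g_ge0 x : 0 <= g x := le_trans (f_ge0 x) (fg x).
rewrite /integral !patch_setT.
have posE (h : T -> \bar R) : (forall x, 0 <= h x) -> h^\+ = h /\ h^\- = cst 0.
  move=> h_ge0; split; apply/funext => x.
  - exact: ge0_funeposE (fun x _ => h_ge0 x) x (in_setT x).
  - exact: ge0_funenegE (fun x _ => h_ge0 x) x (in_setT x).
have [-> ->] := posE f f_ge0; have [-> ->] := posE g g_ge0.
apply: leeB => //; apply: ge_ereal_sup => _ [h hf <-].
by apply: ereal_sup_ubound; exists h => //= x; exact: le_trans (hf x) (fg x).
Qed.

Lemma expeR_psiE_le {R : realType} (x m Xh xi : R) :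
  (`|x - Xh| <= 1)%R -> (-1 <= xi <= 1)%R ->
  expeR (xi%:E * (x%:E - m%:E) - (xi ^+ 2)%:E * psiE `|x - Xh|%R)
    <= ((1 + xi * (x - Xh)) * expR (- (xi * (m - Xh))))%:E.
Proof.
move=> u_le1 /andP[xi_geN1 xi_le1].
have K_gt0 : (0 < expR (- (xi * (m - Xh))))%R by exact: expR_gt0.
rewrite /psiE; case: ifPn => [u_lt1|].
  rewrite -EFinB /= lee_fin.
  have -> : (xi * (x - m) - xi ^+ 2 * (- ln (1 - `|x - Xh|) - `|x - Xh|)
    = (xi * (x - Xh) - xi ^+ 2 * psi `|x - Xh|) + - (xi * (m - Xh)))%R.
    by rewrite /psi; ring.
  rewrite expRD ler_wpM2r ?(ltW K_gt0) //; apply: expR_psi_le; first lra.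
  by move: u_lt1; rewrite ltr_norml.
rewrite -leNgt => u_ge1.
have xiu_ge0 : (0 <= 1 + xi * (x - Xh))%R.
  by move: u_le1 u_ge1; rewrite ler_norml ler_normr => /andP[? ?] /orP[?|?]; nra.
have [->|xi_neq0] := eqVneq xi 0%R.
  by rewrite expr0n /= !mul0e !mul0r oppr0 expR0 addr0 mulr1 sube0 expeR0.
rewrite mulry gtr0_sg ?exprn_even_gt0 // mul1e -EFinB -EFinM /=.
by rewrite lee_fin mulr_ge0 // ltW.
Qed.

Lemma integral_affine {d} {T : measurableType d} {R : realType}
    (P : probability T R) (X : T -> R) (a b m : R) :
  P.-integrable setT (EFin \o X) -> \int[P]_t (X t)%:E = m%:E ->
  \int[P]_t (a + b * X t)%:E = (a + b * m)%:E.
Proof.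
move=> intX intXE.
rewrite (eq_integral (fun t => a%:E + b%:E * (X t)%:E)) //.
rewrite integralD ?integralZl ?intXE //; last 2 first.
- exact: finite_measure_integrable_cst.
- exact: integrableZl.
have -> : \int[P]_t a%:E = a%:E by have := expectation_cst P a; rewrite unlock.
by rewrite EFinD EFinM.
Qed.

Theorem mainTheorem2 (R : realType) (d : measure_display) (T : measurableType d)
  (P : probability T R) (X : T -> R)
  (hXm : measurable_fun setT X) (hX01 : forall t, (0 <= X t <= 1)%R)
  (Xh : R) (hXh : (0 <= Xh < 1)%R) (xi : R) (hxi : (-1 <= xi <= 1)%R) :
  \int[P]_t expeR (xi%:E * ((X t)%:E - 'E_P[X])
                   - (xi ^+ 2)%:E * psiE `|X t - Xh|%R) <= 1.
Proof.
have intX : P.-integrable setT (EFin \o X).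
  apply: measurable_bounded_integrable => //.
  - by rewrite (le_lt_trans (probability_le1 P measurableT)) ?ltry.
  - by exists 1%R; split => // M M1 x _ /=; rewrite ger0_norm; have := hX01 x; lra.
have EXE : 'E_P[X] = (fine 'E_P[X])%:E.
  by rewrite fineK // unlock; exact: integrable_fin_num.
rewrite EXE; set m := fine 'E_P[X].
have dist_le1 t : (`|X t - Xh| <= 1)%R.
  by rewrite ler_norml; have := hX01 t; lra.
apply: le_trans (ge0_le_integralT P _ _ (fun t => expeR_ge0 _)
  (fun t => expeR_psiE_le (X t) m Xh xi (dist_le1 t) hxi)) _.
set y := (xi * (m - Xh))%R.
rewrite (eq_integral (fun t => (expR (- y) * (1 - xi * Xh)
                                + expR (- y) * xi * X t)%:E)); last first.
  by move=> t _; congr EFin; ring.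
rewrite (integral_affine _ _ _ _ m intX); last by rewrite -EXE unlock.
have -> : (expR (- y) * (1 - xi * Xh) + expR (- y) * xi * m
          = expR (- y) * (1 + y))%R by rewrite /y; ring.
rewrite lee_fin -[leRHS]expR0 -(addNr y) expRD.
by rewrite ler_wpM2l ?expR_ge1Dx // ltW ?expR_gt0.
Qed.
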